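(* Every odd wheel is cycle-extendable.
   Context: An odd wheel is obtained from an odd cycle $u_0u_1\cdots u_{2k}u_0$ ($k\ge1$) by adding a new vertex $h$ and the edges $hu_i$ for all $i$. A matching covered graph (connected, at least two vertices, every edge in a perfect matching) is cycle-extendable if for every even cycle $C$ the graph $G-V(C)$ has a perfect matching. *)

From mathcomp Require Import all_boot all_order.
Set Implicit Arguments. Unset Strict Implicit. Unset Printing Implicit Defensive.

Definition simple_graph (T : finType) (adj : rel T) : Prop :=
  symmetric adj /\ irreflexive adj.

Definition is_edge (T : finType) (adj : rel T) (e : {set T}) : Prop :=
  exists x y, adj x y /\ e = [set x; y].

Definition perfect_matching_on (T : finType) (adj : rel T) (U : {set T})
    (M : {set {set T}}) : Prop :=
  (forall e, e \in M -> is_edge adj e /\ e \subset U) /\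
  (forall v, v \in U -> #|[set e in M | v \in e]| = 1).

Definition has_perfect_matching_on (T : finType) (adj : rel T) (U : {set T}) : Prop :=
  exists M, perfect_matching_on adj U M.

Definition connected_graph (T : finType) (adj : rel T) : Prop :=
  forall x y : T, connect adj x y.

Definition matching_covered (T : finType) (adj : rel T) : Prop :=
  connected_graph adj /\ 2 <= #|T| /\
  forall x y, adj x y ->
    exists M, perfect_matching_on adj [set: T] M /\ [set x; y] \in M.

Definition is_cycle (T : finType) (adj : rel T) (c : seq T) : Prop :=
  3 <= size c /\ uniq c /\ cycle adj c.

Definition is_even_cycle (T : finType) (adj : rel T) (c : seq T) : Prop :=
  is_cycle adj c /\ ~~ odd (size c).

Definition cycle_extendable (T : finType) (adj : rel T) : Prop :=
  matching_covered adj /\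
  forall c : seq T, is_even_cycle adj c ->
    has_perfect_matching_on adj (~: [set v in c]).

(* The odd wheel W_k on 'I_(2k+2): vertices 0..2k are the rim u_0..u_{2k}
   (an odd cycle of length 2k+1), vertex 2k+1 is the hub h. *)
Definition wheel_adj (k : nat) : rel 'I_(k.*2.+2) :=
  fun x y =>
    let n := k.*2.+1 in
    if (x == n :> nat) then (y < n)
    else if (y == n :> nat) then (x < n)
    else ((x.+1 %% n == y) || (y.+1 %% n == x)).

From mathcomp Require Import all_boot all_order.
Set Implicit Arguments. Unset Strict Implicit. Unset Printing Implicit Defensive.

(* Index the rim vertices u_j modulo n = 2k+1; the hub h is adjacent to all of
   them.  Deleting h and u_(b+2k) leaves the rim path u_b ... u_(b+2k-1), which
   is perfectly matched by the pairs u_(b+2i) u_(b+2i+1); choosing b suitably puts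
   any given edge into such a perfect matching completed by h u_(b+2k).
   A simple cycle avoiding h uses only rim edges, so it steps around the rim
   always forward or always backward and is the whole rim, which is odd.  Hence an
   even cycle C passes through h, C - h is a rim arc, and G - V(C) is the
   complementary rim arc, of even length, again matched by consecutive pairs. *)

Section PerfectMatchings.

Variables (T : finType) (adj : rel T).

Lemma perfect_matching_onU2 U M x y :
  perfect_matching_on adj U M -> adj x y -> x \notin U -> y \notin U ->
  perfect_matching_on adj ([set x; y] :|: U) ([set x; y] |: M).
Proof.
move=> [M_edges M_cover] xy xNU yNU.
have xyNU e : e \in M -> [disjoint [set x; y] & e].
  move=> eM; case: (M_edges e eM) => _ /subsetP eU.
  by apply/pred0P => v; rewrite !inE; apply/andP => -[/orP[]/eqP-> /eU]; apply/negP.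
split=> [e|v].
  rewrite in_setU1 => /predU1P[-> | eM]; first by split; [exists x, y | exact: subsetUl].
  by case: (M_edges e eM) => ? eU; split=> //; apply: subset_trans eU (subsetUr _ _).
rewrite in_setU => /orP[vxy | vU].
  rewrite -(cards1 [set x; y]); apply: eq_card => e; rewrite !inE.
  have [-> | _] := eqVneq e [set x; y]; first by rewrite vxy.
  by apply/andP => -[eM ve]; move/pred0P/(_ v): (xyNU e eM); rewrite /= vxy ve.
rewrite -(M_cover v vU); apply: eq_card => e; rewrite !inE.
have [-> | //] := eqVneq e [set x; y].
have vNxy : v \notin [set x; y].
  by rewrite !inE; apply/orP => -[]/eqP vE; [move: xNU | move: yNU]; rewrite -vE vU.
by rewrite (negbTE vNxy) !andbF.
Qed.

End PerfectMatchings.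

Lemma cycle_sorted (T : Type) (e : rel T) (c : seq T) : cycle e c -> sorted e c.
Proof. by case: c => //= x s; rewrite rcons_path => /andP[]. Qed.

Section UndirectedFunctionalGraph.

Variables (T : eqType) (f : T -> T).

Definition sym_frel : rel T := [rel x y | frel f x y || frel f y x].

Lemma sym_frel_sym : symmetric sym_frel.
Proof. by move=> x y; rewrite /sym_frel /= orbC. Qed.

Lemma sorted_sym_frel p : {in p &, injective f} -> uniq p -> sorted sym_frel p ->
  sorted (frel f) p \/ sorted (frel f) (rev p).
Proof.
rewrite rev_sorted.
elim: p => [|x [|y s] IH] finj; [by left | by left |].
have ys_inj : {in y :: s &, injective f}.
  by apply: sub_in2 finj => z zys; rewrite inE zys orbT.
rewrite [uniq _]/= [sorted _ _]/= => /andP[xNys ys_uniq] /andP[xy ys_sorted].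
have {IH ys_inj ys_uniq ys_sorted} [fwd | bwd] := IH ys_inj ys_uniq ys_sorted.
(* Turning back after a backward step revisits a vertex; after a forward step it
   contradicts injectivity. *)
all: move: xy => /orP[fx | fy].
- by left; apply/andP.
- case: s fwd xNys {finj} => [|z s] /= fwd; first by right; apply/andP.
  by move: fwd fy => /andP[/eqP fyz _] /eqP fyx; rewrite -fyx fyz !inE eqxx orbT.
- case: s bwd xNys finj => [|z s] /= bwd; first by left; apply/andP.
  move: bwd fx => /andP[/eqP fz _] /eqP fx xNzs finj.
  have xz : x = z by apply: finj; rewrite ?inE ?eqxx ?orbT // fx fz.
  by move: xNzs; rewrite xz !inE eqxx !orbT.
- by right; apply/andP.
Qed.

Lemma sorted_fcycle p : uniq p -> 3 <= size p -> sorted (frel f) p ->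
  cycle sym_frel p -> fcycle f p.
Proof.
case: p => [|x [|y [|z s]]] //= /and3P[_ yNzs _] _ /andP[/eqP fx yzs].
move: yzs; rewrite !rcons_path fx eqxx => /andP[-> ->] /and4P[_ _ _].
rewrite /sym_frel /= => /orP[-> // | /eqP fxlast].
by move: yNzs; rewrite -fx fxlast mem_last.
Qed.

Lemma fcycle_sym_frel p : {in p &, injective f} -> uniq p -> 3 <= size p ->
  cycle sym_frel p -> fcycle f p \/ fcycle f (rev p).
Proof.
move=> finj p_uniq p_size p_cycle.
have [fwd | bwd] := sorted_sym_frel finj p_uniq (cycle_sorted p_cycle).
  by left; apply: sorted_fcycle.
right; apply: sorted_fcycle; rewrite ?rev_uniq ?size_rev //.
by rewrite rev_cycle (eq_cycle (e' := sym_frel)) // => u v; apply: sym_frel_sym.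
Qed.

End UndirectedFunctionalGraph.

Section OddWheel.

Variable k : nat.
Local Notation n := k.*2.+1.
Local Notation V := 'I_n.+1.
Local Notation adj := (@wheel_adj k).

Definition hub : V := ord_max.
Definition rim (j : nat) : V := inord (j %% n).
Definition rim_succ (v : V) : V := rim v.+1.

Lemma rimK j : rim j = j %% n :> nat.
Proof. by rewrite inordK // ltnS ltnW // ltn_pmod. Qed.

Lemma eq_rim i j : (rim i == rim j) = (i == j %[mod n]).
Proof. by rewrite -val_eqE /= !rimK. Qed.

Lemma rim_neq_hub j : rim j != hub.
Proof. by rewrite -val_eqE /= rimK ltn_eqF // ltn_pmod. Qed.

Lemma rimE (v : V) : v != hub -> rim v = v.
Proof.
move=> vNhub; apply: val_inj; rewrite /= rimK modn_small //.
by rewrite ltn_neqAle -ltnS ltn_ord andbT; move: vNhub; rewrite -val_eqE.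
Qed.

Lemma wheel_adj_sym : symmetric adj.
Proof.
move=> u v; rewrite /wheel_adj /=.
case: (u =P n :> nat) => [-> | _]; case: (v =P n :> nat) => [vh | _] //=.
- by rewrite vh.
- exact: orbC.
Qed.

Lemma adj_hub_rim j : adj hub (rim j).
Proof. by rewrite /wheel_adj eqxx rimK ltn_pmod. Qed.

Lemma adj_rim_hub j : adj (rim j) hub.
Proof. by rewrite wheel_adj_sym adj_hub_rim. Qed.

Lemma adj_hub_hub : adj hub hub = false.
Proof. by rewrite /wheel_adj /= eqxx ltnn. Qed.

Lemma adj_rimE (u v : V) : u != hub -> v != hub -> adj u v = sym_frel rim_succ u v.
Proof.
rewrite -!val_eqE => /negbTE uNhub /negbTE vNhub.
by rewrite /wheel_adj /sym_frel /= uNhub vNhub -!val_eqE /= !rimK.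
Qed.

Lemma rim_succ_rim j : rim_succ (rim j) = rim j.+1.
Proof. by apply/eqP; rewrite /rim_succ eq_rim rimK -[(j %% n).+1]addn1 modnDml addn1. Qed.

Lemma adj_rimS j : adj (rim j) (rim j.+1).
Proof. by rewrite adj_rimE ?rim_neq_hub // /sym_frel /= rim_succ_rim eqxx. Qed.

Lemma rim_succ_inj : {in predC1 hub &, injective rim_succ}.
Proof.
move=> u v; rewrite !inE => /rimE uE /rimE vE /eqP.
by rewrite /rim_succ eq_rim -(addn1 u) -(addn1 v) eqn_modDr -eq_rim uE vE => /eqP.
Qed.

Section RimSequences.

Variable p : seq V.
Hypothesis hNp : hub \notin p.

Let p_rim : all (predC1 hub) p.
Proof. by apply/allP => v; apply: contraTneq => ->. Qed.

Lemma rim_succ_in_inj : {in p &, injective rim_succ}.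
Proof. by apply: sub_in2 rim_succ_inj; apply/allP. Qed.

Lemma sorted_rimE : sorted adj p = sorted (sym_frel rim_succ) p.
Proof. by apply: eq_in_sorted p_rim => u v; rewrite !inE; apply: adj_rimE. Qed.

Lemma cycle_rimE : cycle adj p = cycle (sym_frel rim_succ) p.
Proof. by apply: eq_in_cycle p_rim => u v; rewrite !inE; apply: adj_rimE. Qed.

End RimSequences.

Definition arc (b L : nat) : seq V := [seq rim (b + j) | j <- iota 0 L].

Lemma size_arc b L : size (arc b L) = L.
Proof. by rewrite size_map size_iota. Qed.

Lemma arcD b L1 L2 : arc b (L1 + L2) = arc b L1 ++ arc (b + L1) L2.
Proof.
rewrite /arc iotaD map_cat -[in iota L1 _](addn0 L1) iotaDl -map_comp.
by congr (_ ++ _); apply: eq_map => j /=; rewrite addnA.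
Qed.

Lemma arcS b L : arc b L.+1 = rim b :: arc b.+1 L.
Proof. by rewrite -[L.+1]add1n arcD addn1 /arc /= addn0. Qed.

Lemma arcSr b L : arc b L.+1 = rcons (arc b L) (rim (b + L)).
Proof. by rewrite -[L.+1]addn1 arcD cats1 /arc /= addn0. Qed.

Lemma arc_rim a L : arc (rim a) L = arc a L.
Proof. by apply: eq_map => j; apply/eqP; rewrite eq_rim rimK modnDml. Qed.

Lemma arc_uniq b L : L <= n -> uniq (arc b L).
Proof.
move=> Ln; rewrite map_inj_in_uniq ?iota_uniq // => i j.
rewrite !mem_iota => /andP[_ iL] /andP[_ jL] /eqP.
by rewrite eq_rim eqn_modDl !modn_small ?(leq_trans _ Ln) // => /eqP.
Qed.

Lemma hub_notin_arc b L : hub \notin arc b L.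
Proof. by apply/mapP => -[j _ /eqP]; rewrite eq_sym (negbTE (rim_neq_hub _)). Qed.

Lemma mem_arc b (v : V) : v != hub -> v \in arc b n.
Proof.
(* The offset v - b modulo n, written without subtraction as v + b (n - 1). *)
move=> /rimE vE; apply/mapP; exists ((v + b * k.*2) %% n).
  by rewrite mem_iota ltn_pmod.
by rewrite -{1}vE; apply/eqP; rewrite eq_rim modnDmr addnCA -mulnS addnC modnMDl.
Qed.

Fixpoint arc_matching (b t : nat) : {set {set V}} :=
  if t is t'.+1 then [set rim (b + t'.*2); rim (b + t'.*2).+1] |: arc_matching b t'
  else set0.

Lemma arc_matchingP b t : t.*2 <= n ->
  perfect_matching_on adj [set v in arc b t.*2] (arc_matching b t).
Proof.
elim: t => [|t IH] tn; first by split=> [e|v]; rewrite !inE.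
have arc_last2 : arc b t.+1.*2 = arc b t.*2 ++ [:: rim (b + t.*2); rim (b + t.*2).+1].
  by rewrite doubleS -[t.*2.+2]addn2 arcD /arc /= addn0 addn1.
have -> : [set v in arc b t.+1.*2] =
    [set rim (b + t.*2); rim (b + t.*2).+1] :|: [set v in arc b t.*2].
  by apply/setP => v; rewrite arc_last2 !inE mem_cat !inE orbC.
have := arc_uniq b tn; rewrite arc_last2 cat_uniq /= !negb_or => /and3P[_ /and3P[t1 t2 _] _].
apply: perfect_matching_onU2; rewrite ?inE //.
- by apply: IH; rewrite (leq_trans _ tn) // doubleS leqW.
- exact: adj_rimS.
Qed.

Lemma arc_matching_head b t : 0 < t -> [set rim b; rim b.+1] \in arc_matching b t.
Proof.
elim: t => [|[|t] IH] // _; first by rewrite /= addn0 setU11.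
by rewrite /= setU1r ?IH.
Qed.

Lemma wheel_perfect_matching b :
  perfect_matching_on adj [set: V] ([set hub; rim (b + k.*2)] |: arc_matching b k).
Proof.
have arc_full : arc b n = rcons (arc b k.*2) (rim (b + k.*2)) by rewrite arcSr.
have -> : [set: V] = [set hub; rim (b + k.*2)] :|: [set v in arc b k.*2].
  apply/setP => v; rewrite !inE; have [-> // | vNhub] := eqVneq v hub.
  by have := mem_arc b vNhub; rewrite arc_full mem_rcons inE.
apply: perfect_matching_onU2; rewrite ?inE ?hub_notin_arc ?adj_hub_rim //.
- exact: arc_matchingP.
- by have := arc_uniq b (leqnn n); rewrite arc_full rcons_uniq => /andP[].
Qed.

Lemma hub_edge_in_perfect_matching (v : V) : v != hub ->
  exists M, perfect_matching_on adj [set: V] M /\ [set hub; v] \in M.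
Proof.
move=> /rimE vE; exists ([set hub; rim (v.+1 + k.*2)] |: arc_matching v.+1 k).
split; first exact: wheel_perfect_matching.
suff -> : rim (v.+1 + k.*2) = v by rewrite setU11.
by rewrite -[RHS]vE; apply/eqP; rewrite eq_rim addSn -addnS modnDr.
Qed.

Lemma rim_edge_in_perfect_matching (v : V) : 0 < k -> v != hub ->
  exists M, perfect_matching_on adj [set: V] M /\ [set v; rim_succ v] \in M.
Proof.
move=> k_gt0 /rimE vE; exists ([set hub; rim (v + k.*2)] |: arc_matching v k).
split; first exact: wheel_perfect_matching.
by rewrite setU1r // /rim_succ -{1}vE arc_matching_head.
Qed.

Lemma wheel_matching_covered : 0 < k -> matching_covered adj.
Proof.
move=> k_gt0; split; [|split]; last 1 first.
- move=> u v uv; have [uh | uNhub] := eqVneq u hub.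
    rewrite uh in uv *; apply: hub_edge_in_perfect_matching.
    by apply: contraTneq uv => ->; rewrite adj_hub_hub.
  have [-> | vNhub] := eqVneq v hub.
    by rewrite setUC; apply: hub_edge_in_perfect_matching.
  move: uv; rewrite adj_rimE // /sym_frel /= => /orP[] /eqP <-; last rewrite setUC;
    exact: rim_edge_in_perfect_matching.
- move=> u v; apply: (@connect_trans _ _ hub).
    have [-> | /rimE <-] := eqVneq u hub; [exact: connect0 | exact/connect1/adj_rim_hub].
  have [-> | /rimE <-] := eqVneq v hub; [exact: connect0 | exact/connect1/adj_hub_rim].
- by rewrite card_ord.
Qed.

Lemma fpath_rim_arc (x : V) s :
  x != hub -> fpath rim_succ x s -> x :: s = arc x (size s).+1.
Proof.
elim: s x => [|y s IH] x /rimE xE /=; first by rewrite /arc /= addn0 xE.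
case/andP => /eqP yE ys; rewrite arcS xE -arc_rim -rim_succ_rim xE yE.
by rewrite -IH // -yE rim_neq_hub.
Qed.

Lemma sorted_rim_arc p : hub \notin p -> sorted (frel rim_succ) p ->
  exists y, p = arc y (size p).
Proof.
case: p => [|x p] /=; first by exists 0.
by rewrite inE negb_or eq_sym => /andP[xNhub _]; exists x; apply: fpath_rim_arc.
Qed.

Lemma rim_size p : uniq p -> hub \notin p -> size p <= n.
Proof.
move=> p_uniq hNp; rewrite -[X in _ <= X](size_arc 0); apply: uniq_leq_size => // v vp.
by apply: mem_arc; apply: contraNneq hNp => <-.
Qed.

Lemma rim_fcycle_size c : 0 < size c -> uniq c -> hub \notin c -> fcycle rim_succ c ->
  size c = n.
Proof.
case: c => [|x s] // _ xs_uniq hNxs.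
have xNhub : x != hub by apply: contraNneq hNxs => <-; exact: mem_head.
move=> /(fpath_rim_arc xNhub); rewrite size_rcons arcSr -rcons_cons => /rcons_inj[_ _ /eqP].
rewrite -{1}(rimE xNhub) eq_rim -{1}(addn0 x) eqn_modDl mod0n eq_sym => n_dvd.
by apply/eqP; rewrite eqn_leq rim_size //= dvdn_leq.
Qed.

Lemma even_cycle_mem_hub c : is_even_cycle adj c -> hub \in c.
Proof.
case=> -[c_size [c_uniq c_cycle]] c_even; apply/negPn/negP => hNc.
rewrite cycle_rimE // in c_cycle.
have c_n : size c = n.
  have c_gt0 : 0 < size c by apply: leq_trans c_size.
  have [fc | fc] := fcycle_sym_frel (rim_succ_in_inj hNc) c_uniq c_size c_cycle;
    last rewrite -size_rev;
    by apply: rim_fcycle_size; rewrite ?size_rev ?rev_uniq ?mem_rev.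
by move: c_even; rewrite c_n /= odd_double.
Qed.

Lemma rim_path_arc p : uniq p -> hub \notin p -> sorted adj p ->
  exists y, p =i arc y (size p).
Proof.
move=> p_uniq hNp; rewrite sorted_rimE // => p_sorted.
have [fwd | bwd] := sorted_sym_frel (rim_succ_in_inj hNp) p_uniq p_sorted.
  by have [y p_arc] := sorted_rim_arc hNp fwd; exists y => v; rewrite {1}p_arc.
have [y rev_arc] : exists y, rev p = arc y (size (rev p)).
  by apply: sorted_rim_arc; rewrite ?mem_rev.
by exists y => v; rewrite -mem_rev rev_arc size_rev.
Qed.

Lemma setC_hub_arc y L : L <= n ->
  ~: (hub |: [set v in arc y L]) = [set v in arc (y + L) (n - L)].
Proof.
move=> Ln; have arc_split : arc y n = arc y L ++ arc (y + L) (n - L).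
  by rewrite -arcD subnKC.
have := arc_uniq y (leqnn n); rewrite arc_split cat_uniq => /and3P[_ disj _].
apply/setP => v; rewrite !inE negb_or; have [-> | vNhub] := eqVneq v hub.
  by rewrite (negbTE (hub_notin_arc (y + L) _)).
have := mem_arc y vNhub; rewrite arc_split mem_cat.
case: (v \in arc y L) / idP => //= vL _; apply/esym/negbTE; apply: contra disj => vR.
by apply/hasP; exists v.
Qed.

Lemma even_cycle_extendable c : is_even_cycle adj c ->
  has_perfect_matching_on adj (~: [set v in c]).
Proof.
move=> c_even; have [i q c_rot] := rot_to (even_cycle_mem_hub c_even).
case: c_even => -[_ [c_uniq c_cycle]] c_size_even.
have /andP[hNq q_uniq] : uniq (hub :: q) by rewrite -c_rot rot_uniq.
have q_sorted : sorted adj q.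
  by move: c_cycle; rewrite -(rot_cycle i) c_rot /= rcons_path => /andP[/path_sorted].
have [y q_arc] := rim_path_arc q_uniq hNq q_sorted.
have -> : [set v in c] = hub |: [set v in arc y (size q)].
  by apply/setP => v; rewrite !inE -(mem_rot i) c_rot inE q_arc.
have q_n := rim_size q_uniq hNq.
have rest_even : ~~ odd (n - size q).
  by rewrite oddB // /= odd_double; move: c_size_even; rewrite -(size_rot i) c_rot /= negbK.
exists (arc_matching (y + size q) (n - size q)./2).
rewrite setC_hub_arc // -{1}(even_halfK rest_even).
by apply: arc_matchingP; rewrite even_halfK ?leq_subr.
Qed.

End OddWheel.

Theorem proposition4p1 (k : nat) : 1 <= k -> cycle_extendable (@wheel_adj k).
Proof.
move=> k_gt0; split; first exact: wheel_matching_covered.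
exact: even_cycle_extendable.
Qed.
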